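(* Let $\Delta\in\mathbb F^{m\times m}$ be a connection matrix with column/row partition $J_0,\dots,J_b$, and let $\widetilde\Delta^0,\dots,\widetilde\Delta^{m-1}$ be produced by the Row Cancellation Algorithm (RCA) applied to $\Delta$. Then: (i) for $r=0,\dots,m-1$, $\widetilde\Delta^r$ is compliant with the allowable sparsity pattern of $\Delta$; (ii) for $r=1,\dots,m-1$, every entry of $\widetilde\Delta^r$ at a primary pivot position of $\widetilde\Delta^r$ is nonzero, and every nonzero entry of $\widetilde\Delta^r$ at a position $(i,j)$ strictly below the $r$-th diagonal either is at a primary pivot position or lies in a column $j$ containing a (unique) primary pivot position $(i',j)$ with $i'>i$; (iii) if $(p-r,p)$ is marked as a primary pivot at iteration $r\le m-2$, then $\widetilde\Delta^s_{p-r,q}=0$ for all $q>p$ and all $s$ with $r+1\le s\le m-1$, and $\widetilde\Delta^s_{p\,\cdot}=0$ (the whole $p$-th row vanishes) for all $s$ with $r+1\le s\le m-1$; (iv) if $(i,j)$ is a primary pivot position of $\widetilde\Delta^{m-1}$, then column $i$ contains no primary pivot position; (v) each row contains at most one primary pivot position of $\widetilde\Delta^{m-1}$.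
   Context: Throughout, $\mathbb F$ is a field and $m\ge1$. $A_{i\cdot}$ is the $i$-th row of $A$. $U^{pq}$ is the $m\times m$ matrix whose only nonzero entry is a $1$ in position $(p,q)$. Superscripts on matrices are indices, not powers. A connection matrix (over $\mathbb F$) is a matrix $\Delta\in\mathbb F^{m\times m}$ together with a partition $\{1,\dots,m\}=J_0\sqcup\cdots\sqcup J_b$ (the column/row partition; the $J_k$ need not consist of consecutive integers) such that $\Delta$ is upper triangular, $\Delta\Delta=0$, and $\Delta_{ij}=0$ unless $i<j$ and $(i,j)\in\bigcup_{k=1}^bJ_{k-1}\times J_k$. This set of positions is the allowable sparsity pattern; a matrix is compliant with it if all its nonzero entries lie in it. For $1\le r\le m-1$ the $r$-th diagonal is $\{(j-r,j):r<j\le m\}$; a position $(i,j)$ is strictly below the $r$-th diagonal if $j-i<r$. Row Cancellation Algorithm (RCA) applied to a connection matrix $\Delta$: set $\widetilde\Delta^0=\widetilde\Delta^1=\Delta$. For $r=1,\dots,m-1$ in turn: (Markup) mark permanently as a primary pivot (marked at iteration $r$) every position $(j-r,j)$ on the $r$-th diagonal with $\widetilde\Delta^r_{j-r,j}\ne0$ such that no position of column $j$ was marked as a primary pivot at an earlier iteration. (Update, only for $r\le m-2$) If no position was marked at iteration $r$, put $\widetilde T^r=I$; otherwise let $j_1<\cdots<j_t$ be the columns of the positions marked at iteration $r$, let $\widetilde T^{r,s}=I-\sum_{q=j_s+1}^m\frac{\widetilde\Delta^r_{j_s-r,q}}{\widetilde\Delta^r_{j_s-r,j_s}}U^{j_sq}$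 and $\widetilde T^r=\widetilde T^{r,1}\cdots\widetilde T^{r,t}$. Set $\widetilde\Delta^{r+1}=(\widetilde T^r)^{-1}\widetilde\Delta^r\widetilde T^r$. The primary pivot positions of $\widetilde\Delta^r$ are the positions marked at iterations $1,\dots,r$. *)

From HB Require Import structures.
From mathcomp Require Import all_boot all_order all_algebra.
Set Implicit Arguments. Unset Strict Implicit. Unset Printing Implicit Defensive.
Import GRing.Theory.
Local Open Scope ring_scope.

(* Indices are 0-based ordinals 'I_m (paper: 1..m); only differences and
   order of indices matter, so this is a harmless shift. *)

Section RCA.
Variables (F : fieldType) (m : nat).

(* The partition J_0,...,J_b is encoded by blk : 'I_m -> 'I_b.+1, with
   J_k = blk^-1(k).  A position (i,j) is allowable iff i < j and
   (i,j) in J_{k-1} x J_k for some 1 <= k <= b, i.e. blk j = blk i + 1. *)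
Definition allowable (b : nat) (blk : 'I_m -> 'I_b.+1) (i j : 'I_m) : bool :=
  (i < j)%N && (val (blk j) == (val (blk i)).+1).

Definition compliant (b : nat) (blk : 'I_m -> 'I_b.+1) (A : 'M[F]_m) : Prop :=
  forall i j : 'I_m, A i j != 0 -> allowable blk i j.

Definition connection_matrix (b : nat) (blk : 'I_m -> 'I_b.+1) (D : 'M[F]_m)
  : Prop :=
  [/\ (forall i j : 'I_m, (j < i)%N -> D i j = 0),
      D *m D = 0 &
      compliant blk D].

Definition markup (r : nat) (Dr : 'M[F]_m) (P : {set 'I_m * 'I_m})
  : {set 'I_m * 'I_m} :=
  [set ij : 'I_m * 'I_m | [&& (val ij.1 + r == val ij.2)%N,
                              Dr ij.1 ij.2 != 0 &
                              [forall i' : 'I_m, (i', ij.2) \notin P]]].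

Definition Tfactor (r : nat) (Dr : 'M[F]_m) (j : 'I_m) : 'M[F]_m :=
  1%:M - \sum_(i : 'I_m | (val i + r == val j)%N)
           \sum_(q : 'I_m | (j < q)%N) (Dr i q / Dr i j) *: delta_mx j q.

(* T^r = T^{r,1} ... T^{r,t}, columns j_1 < ... < j_t of the positions marked
   at iteration r (enum 'I_m lists 0,...,m-1 in increasing order);
   T^r = I if nothing is marked. *)
Definition Tmat (r : nat) (Dr : 'M[F]_m) (M : {set 'I_m * 'I_m}) : 'M[F]_m :=
  foldr (fun j A => Tfactor r Dr j *m A) 1%:M
        [seq j <- enum 'I_m | [exists i : 'I_m, (i, j) \in M]].

(* rca D r = (tilde Delta^r, set of positions marked at iterations 1..r-1),
   for r >= 1; rca D 0 = (Delta, empty). *)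
Fixpoint rca (D : 'M[F]_m) (r : nat) : 'M[F]_m * {set 'I_m * 'I_m} :=
  match r with
  | 0 => (D, set0)
  | r'.+1 =>
      match r' with
      | 0 => (D, set0)
      | _ =>
        let Dr := (rca D r').1 in
        let P := (rca D r').2 in
        let M := markup r' Dr P in
        let T := Tmat r' Dr M in
        (invmx T *m Dr *m T, P :|: M)
      end
  end.

Definition RCAmat (D : 'M[F]_m) (r : nat) : 'M[F]_m := (rca D r).1.

Definition marked_at (D : 'M[F]_m) (r : nat) : {set 'I_m * 'I_m} :=
  if r == 0%N then set0 else markup r (RCAmat D r) (rca D r).2.

Definition pivots (D : 'M[F]_m) (r : nat) : {set 'I_m * 'I_m} :=
  if r == 0%N then set0 else (rca D r).2 :|: marked_at D r.

End RCA.

From HB Require Import structures.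
From mathcomp Require Import all_boot all_order all_algebra zify.
Set Implicit Arguments. Unset Strict Implicit. Unset Printing Implicit Defensive.
Import GRing.Theory.
Local Open Scope ring_scope.

(* One iteration conjugates the current matrix A by T = prod_j (1 - N_j), the
   product over the columns j of the new pivots (p, j), where N_j is zero
   outside row j and has entries A_pq / A_pj at the positions (j, q), q > j.
   As A_pq and A_pj are both allowable, q lies in the block of j; so T and
   T^-1 = 1 + sum_j N_j are block upper triangular and conjugation preserves
   compliance.  The rest follows from an invariant of the matrix entering
   iteration r and the pivots found before: A^2 = 0; every such pivot (i, j)
   has A_ij <> 0, row i vanishing right of j and row j vanishing; every nonzero
   entry strictly below the r-th diagonal lies weakly above the unique pivot of
   its column.  Right multiplication by T clears the rows of the new pivots to
   their right.  Left multiplication by T^-1 only changes the rows j of new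
   pivot columns, and these vanish: in row p every other nonzero entry lies in
   a column whose row vanishes, so (T^-1 A T)^2 = 0 forces row j to vanish. *)

Lemma ord_ltn_ind (m : nat) (P : 'I_m -> Prop) :
  (forall y : 'I_m, (forall z : 'I_m, (z < y)%N -> P z) -> P y) ->
  forall y, P y.
Proof.
move=> IH; suff H n : forall y : 'I_m, (y < n)%N -> P y.
  by move=> y; apply: H (ltn_ord y).
elim: n => [//|n IHn] y hy; apply: IH => z hz; apply: IHn.
by rewrite (leq_trans hz) // -ltnS.
Qed.

Lemma sumr_neq0P (R : nmodType) (I : finType) (P : pred I) (f : I -> R) :
  \sum_(i | P i) f i != 0 -> exists2 i, P i & f i != 0.
Proof.
move=> H; apply/exists_inP; apply: contraR H => /exists_inPn H.
by rewrite big1 // => i Pi; apply/eqP/negPn/H.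
Qed.

Lemma mulmx_entry_neq0 (R : pzSemiRingType) (m n p : nat)
    (U : 'M[R]_(m, n)) (V : 'M[R]_(n, p)) x y :
  (U *m V) x y != 0 -> exists2 k, U x k != 0 & V k y != 0.
Proof.
rewrite mxE => /sumr_neq0P [k _ UV]; exists k.
  by apply: contraNneq UV => ->; rewrite mul0r.
by apply: contraNneq UV => ->; rewrite mulr0.
Qed.

Section BlockUpper.
Variables (F : fieldType) (m b : nat) (blk : 'I_m -> 'I_b.+1).

Definition block_upper (U : 'M[F]_m) : Prop :=
  forall x y, U x y != 0 -> (x <= y)%N && (blk x == blk y).

Lemma block_upper1 : block_upper 1%:M.
Proof.
move=> x y; rewrite mxE; case: (eqVneq x y) => [->|_]; last by rewrite eqxx.
by rewrite leqnn eqxx.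
Qed.

Lemma block_upperN U : block_upper U -> block_upper (- U).
Proof. by move=> hU x y; rewrite mxE oppr_eq0 => /hU. Qed.

Lemma block_upperD U V : block_upper U -> block_upper V -> block_upper (U + V).
Proof.
move=> hU hV x y; rewrite mxE; have [U0|/hU //] := eqVneq (U x y) 0.
by rewrite U0 add0r => /hV.
Qed.

Lemma block_upper_sum (I : Type) (s : seq I) (G : I -> 'M[F]_m) :
  (forall i, block_upper (G i)) -> block_upper (\sum_(i <- s) G i).
Proof.
move=> hG; apply: big_ind => [x y|U V|i _]; [by rewrite mxE eqxx | | exact: hG].
exact: block_upperD.
Qed.

Lemma block_upperM U V : block_upper U -> block_upper V -> block_upper (U *m V).
Proof.
move=> hU hV x y /mulmx_entry_neq0 [k /hU/andP[xk /eqP ->] /hV/andP[ky ->]].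
by rewrite (leq_trans xk ky).
Qed.

Lemma compliant_block_conj U A V :
  block_upper U -> block_upper V -> compliant blk A ->
  compliant blk (U *m A *m V).
Proof.
move=> hU hV hA x y /mulmx_entry_neq0 [l /mulmx_entry_neq0 [k]].
move=> /hU/andP[xk /eqP bxk] /hA/andP[kl /eqP bkl] /hV/andP[ly /eqP bly].
by rewrite /allowable (leq_ltn_trans xk (leq_trans kl ly)) -bly bkl bxk /=.
Qed.

End BlockUpper.

Section Elimination.
Variables (F : fieldType) (m r : nat) (A : 'M[F]_m).

Definition elim_coef (j y : 'I_m) : F :=
  \sum_(i : 'I_m | (val i + r == val j)%N) A i y / A i j.

Definition elim_part (j : 'I_m) : 'M[F]_m :=
  \sum_(i : 'I_m | (val i + r == val j)%N)
     \sum_(q : 'I_m | (j < q)%N) (A i q / A i j) *: delta_mx j q.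

Lemma TfactorE j : Tfactor r A j = 1%:M - elim_part j.
Proof. by []. Qed.

Lemma sum_delta_mx_row_entry (c : 'I_m -> F) (j x y : 'I_m) :
  (\sum_(q : 'I_m | (j < q)%N) c q *: delta_mx j q) x y =
  if (x == j) && (j < y)%N then c y else 0.
Proof.
rewrite summxE; under eq_bigr do rewrite !mxE.
have [_|nxj] /= := eqVneq x j; last by rewrite big1 // => q _; rewrite mulr0.
case: ltnP => hy.
  rewrite (bigD1 y) //= eqxx mulr1 big1 ?addr0 // => q /andP[_ nqy].
  by rewrite eq_sym (negbTE nqy) mulr0.
rewrite big1 // => q jq; case: eqVneq => [yq|_]; last by rewrite mulr0.
by rewrite yq leqNgt jq in hy.
Qed.

Lemma elim_part_entry j x y :
  elim_part j x y = if (x == j) && (j < y)%N then elim_coef j y else 0.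
Proof.
rewrite summxE; under eq_bigr do rewrite sum_delta_mx_row_entry.
by case: ifP => // _; rewrite big1.
Qed.

Lemma elim_part_mul0 (j j' : 'I_m) : (j <= j')%N -> elim_part j' *m elim_part j = 0.
Proof.
move=> jj'; apply/matrixP => x y; rewrite !mxE big1 // => k _.
rewrite !elim_part_entry; have [->|_] := eqVneq k j; last by rewrite mulr0.
by rewrite ltnNge jj' andbF mul0r.
Qed.

Definition Tprod (s : seq 'I_m) : 'M[F]_m :=
  foldr (fun j X => Tfactor r A j *m X) 1%:M s.

Lemma Tprod_mul_elim_part s (j : 'I_m) :
  all (fun j' : 'I_m => (j < j')%N) s -> Tprod s *m elim_part j = elim_part j.
Proof.
elim: s => [|j' s IH] /=; first by rewrite mul1mx.
case/andP=> jj' js; rewrite -mulmxA IH // TfactorE mulmxBl mul1mx.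
by rewrite elim_part_mul0 ?subr0 // ltnW.
Qed.

(* N_j' N_j = 0 for j <= j', so the product telescopes. *)
Lemma Tprod_inv s : sorted (fun a b : 'I_m => (a < b)%N) s ->
  Tprod s *m (1%:M + \sum_(j <- s) elim_part j) = 1%:M.
Proof.
elim: s => [|j s IH] /= ps; first by rewrite big_nil addr0 mulmx1.
have ltn_tr : transitive (fun a b : 'I_m => (a < b)%N).
  by move=> a c d; apply: ltn_trans.
have js := order_path_min ltn_tr ps.
rewrite big_cons addrCA -mulmxA mulmxDr IH ?(path_sorted ps) //.
rewrite Tprod_mul_elim_part // TfactorE mulmxDr mulmx1 mulmxBl mul1mx.
by rewrite elim_part_mul0 // subr0 addrC subrK.
Qed.

Variables (b : nat) (blk : 'I_m -> 'I_b.+1).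
Hypothesis compA : compliant blk A.

(* A_iy and A_ij are both allowable, so y and j lie in the block after blk i. *)
Lemma elim_coef_blk j y : elim_coef j y != 0 -> blk y = blk j.
Proof.
case/sumr_neq0P => i _; rewrite mulf_eq0 negb_or invr_eq0.
case/andP => /compA/andP[_ /eqP iy] /compA/andP[_ /eqP ij].
by apply: val_inj; rewrite iy ij.
Qed.

Lemma block_upper_elim_part j : block_upper blk (elim_part j).
Proof.
move=> x y; rewrite elim_part_entry; case: ifP => [|_]; last by rewrite eqxx.
by case/andP => /eqP -> jy /elim_coef_blk ->; rewrite ltnW ?eqxx.
Qed.

Lemma block_upper_Tprod s : block_upper blk (Tprod s).
Proof.
elim: s => [|j s IH] /=; first exact: block_upper1.
apply: block_upperM IH; rewrite TfactorE.
exact/block_upperD/block_upperN/block_upper_elim_part/block_upper1.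
Qed.

Lemma block_upper_Tprod_inv s :
  block_upper blk (1%:M + \sum_(j <- s) elim_part j).
Proof.
apply: block_upperD (block_upper1 _) _.
exact: block_upper_sum block_upper_elim_part.
Qed.

End Elimination.

Lemma in_markup (F : fieldType) (m r : nat) (A : 'M[F]_m) P i j :
  ((i, j) \in markup r A P) =
  [&& (i + r == j)%N, A i j != 0 & [forall i', (i', j) \notin P]].
Proof. by rewrite inE. Qed.

Definition rca_step (F : fieldType) (m r : nat) (A : 'M[F]_m)
  (P : {set 'I_m * 'I_m}) : 'M[F]_m :=
  let T := Tmat r A (markup r A P) in invmx T *m A *m T.

(* [A] is the matrix entering iteration [r], and [P] the set of positions
   marked at iterations 1, ..., r-1. *)
Definition rca_invariant (F : fieldType) (m b : nat) (blk : 'I_m -> 'I_b.+1)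
  (r : nat) (A : 'M[F]_m) (P : {set 'I_m * 'I_m}) : Prop :=
  [/\ A *m A = 0, compliant blk A,
     forall i j, (i, j) \in P -> [/\ (j < i + r)%N, A i j != 0,
       forall q : 'I_m, (j < q)%N -> A i q = 0 & forall q, A j q = 0],
     forall i j : 'I_m, (j < i + r)%N -> A i j != 0 ->
       exists2 i', (i', j) \in P & (i <= i')%N &
     forall i i' j, (i, j) \in P -> (i', j) \in P -> i = i'].

Section Step.
Variables (F : fieldType) (m b : nat) (blk : 'I_m -> 'I_b.+1) (r : nat).
Variables (A : 'M[F]_m) (P : {set 'I_m * 'I_m}).
Hypothesis invA : rca_invariant blk r A P.

Let A_sq0 : A *m A = 0. Proof. by case: invA. Qed.
Let A_compliant : compliant blk A. Proof. by case: invA. Qed.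
Let old_pivotP (i j : 'I_m) : (i, j) \in P -> [/\ (j < i + r)%N, A i j != 0,
  forall q : 'I_m, (j < q)%N -> A i q = 0 & forall q, A j q = 0].
Proof. by case: invA => _ _ + _ _; apply. Qed.
Let low_entry_pivot (i j : 'I_m) : (j < i + r)%N -> A i j != 0 ->
  exists2 i', (i', j) \in P & (i <= i')%N.
Proof. by case: invA => _ _ _ + _; apply. Qed.
Let old_pivot_uniq (i i' j : 'I_m) : (i, j) \in P -> (i', j) \in P -> i = i'.
Proof. by case: invA => _ _ _ _; apply. Qed.

Let M := markup r A P.
Let new_col (j : 'I_m) := [exists i, (i, j) \in M].
Let new_cols := [seq j <- enum 'I_m | new_col j].
Let T := Tmat r A M.
Let N := \sum_(j <- new_cols) elim_part r A j.
Let AT := A *m T.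
Let B := rca_step r A P.

Lemma new_colP (j : 'I_m) : reflect (exists i, (i, j) \in M) (new_col j).
Proof. exact: existsP. Qed.

Lemma new_col_of (i j : 'I_m) : (i, j) \in M -> new_col j.
Proof. by move=> h; apply/new_colP; exists i. Qed.

Lemma elim_coef_new (i x y : 'I_m) : (i, x) \in M -> elim_coef r A x y = A i y / A i x.
Proof.
rewrite in_markup => /and3P[/eqP ix _ _]; rewrite /elim_coef (big_pred1 i) //.
by move=> i' /=; rewrite -ix eqn_add2r; apply/eqP/eqP => [/val_inj|->].
Qed.

Lemma N_entry (x y : 'I_m) :
  N x y = if new_col x && (x < y)%N then elim_coef r A x y else 0.
Proof.
rewrite summxE big_filter big_enum_cond; under eq_bigr do rewrite elim_part_entry.
case: (boolP (new_col x)) => hx /=.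
  rewrite (bigD1 x) //= eqxx /= big1 ?addr0 // => j /andP[_ njx].
  by rewrite eq_sym (negbTE njx).
by rewrite big1 // => j hj; case: eqVneq => [xj|] //; rewrite xj hj in hx.
Qed.

Lemma N_old_row (x y : 'I_m) : ~~ new_col x -> N x y = 0.
Proof. by move=> hx; rewrite N_entry (negbTE hx). Qed.

Lemma new_cols_sorted : sorted (fun a b : 'I_m => (a < b)%N) new_cols.
Proof.
apply: sorted_filter; first by move=> a c d; apply: ltn_trans.
by have := iota_ltn_sorted 0 m; rewrite -val_enum_ord sorted_map.
Qed.

Lemma T_mul_inv : T *m (1%:M + N) = 1%:M.
Proof. exact: Tprod_inv new_cols_sorted. Qed.

Lemma invmx_T : invmx T = 1%:M + N.
Proof.
have [T_unit _] := mulmx1_unit T_mul_inv.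
by have := congr1 (mulmx (invmx T)) T_mul_inv; rewrite mulmxA mulVmx // mul1mx mulmx1.
Qed.

Lemma low_entry_row0 (i k : 'I_m) : A i k != 0 -> (k < i + r)%N -> forall q, A k q = 0.
Proof.
move=> ik kr; have [i' /old_pivotP [_ _ _ row_k] _] := low_entry_pivot kr ik.
exact: row_k.
Qed.

Lemma new_col_low0 (j k : 'I_m) : new_col j -> (j < k + r)%N -> A k j = 0.
Proof.
case/new_colP => i0; rewrite in_markup => /and3P[_ _ /forallP fresh] jk.
apply/eqP; apply: contraT => kj; have [i' hi' _] := low_entry_pivot jk kj.
by move: (fresh i'); rewrite hi'.
Qed.

Lemma old_pivot_col_not_new (i j : 'I_m) : (i, j) \in P -> ~~ new_col j.
Proof.
move=> hij; apply/new_colP => [[i0]]; rewrite in_markup => /and3P[_ _ /forallP fresh].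
by move: (fresh i); rewrite hij.
Qed.

(* For the new pivot (i0, i), the entries A i0 k with k < i have vanishing
   rows k, so (A *m A) i0 j reduces to A i0 i * A i j. *)
Lemma new_col_row_no_lowest (i j : 'I_m) : new_col i -> A i j != 0 ->
  ~ (forall k : 'I_m, (i < k)%N -> A k j = 0).
Proof.
case/new_colP => i0; rewrite in_markup => /and3P[/eqP i0i i0i_nz _] ij low.
have := congr1 (fun X : 'M[F]_m => X i0 j) A_sq0; rewrite !mxE (bigD1 i) //=.
rewrite big1 ?addr0 => [/eqP|k ki]; first by apply/negP; rewrite mulf_neq0.
case: (ltngtP i k) => [ik|ki'|/val_inj ik]; first by rewrite low // mulr0.
- have [->|i0k] := eqVneq (A i0 k) 0; first by rewrite mul0r.
  by rewrite (low_entry_row0 i0k) ?mulr0 // i0i.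
- by rewrite ik eqxx in ki.
Qed.

Lemma new_pivot_row_not_new (i j : 'I_m) : (i, j) \in M -> ~~ new_col i.
Proof.
move=> hij; apply/negP => newi; move: (hij); rewrite in_markup.
case/and3P => /eqP ij ij_nz _; apply: (new_col_row_no_lowest newi ij_nz) => k ik.
by apply: new_col_low0 (new_col_of hij) _; rewrite -ij ltn_add2r.
Qed.

Lemma old_pivot_row_not_new (i j : 'I_m) : (i, j) \in P -> ~~ new_col i.
Proof.
move=> hij; apply/negP => newi; have [jr ij_nz _ _] := old_pivotP hij.
apply: (new_col_row_no_lowest newi ij_nz) => k ik; apply/eqP; apply: contraT => kj.
have jk : (j < k + r)%N by apply: ltn_trans jr _; rewrite ltn_add2r.
have [i' hi' ki'] := low_entry_pivot jk kj.
by move: ki'; rewrite -(old_pivot_uniq hij hi') leqNgt ik.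
Qed.

(* From AT *m (1 + N) = A: as N is strictly upper triangular, this computes
   the columns of AT from left to right. *)
Lemma AT_rec (x y : 'I_m) :
  AT x y = A x y - \sum_(k | new_col k && (k < y)%N) AT x k * elim_coef r A k y.
Proof.
have ATN : AT *m (1%:M + N) = A by rewrite -mulmxA T_mul_inv mulmx1.
move/(congr1 (fun X : 'M[F]_m => X x y)): ATN; rewrite mulmxDr mulmx1 mxE => <-.
suff -> : (AT *m N) x y =
  \sum_(k | new_col k && (k < y)%N) AT x k * elim_coef r A k y by rewrite addrK.
rewrite mxE [RHS]big_mkcond; apply: eq_bigr => k _.
by rewrite N_entry; case: ifP; rewrite ?mulr0.
Qed.

Lemma AT_low (x y : 'I_m) : (y <= x + r)%N -> AT x y = A x y.
Proof.
elim/ord_ltn_ind: y => y IH yr; rewrite AT_rec big1 ?subr0 // => k /andP[newk ky].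
have kr : (k < x + r)%N := leq_trans ky yr.
by rewrite (IH k ky (ltnW kr)) (new_col_low0 newk kr) mul0r.
Qed.

Lemma AT_new_pivot_row (p j y : 'I_m) : (p, j) \in M -> (j < y)%N -> AT p y = 0.
Proof.
move=> pj; move: (pj); rewrite in_markup => /and3P[/eqP pr pj_nz _].
have jr : (j <= p + r)%N by rewrite pr.
elim/ord_ltn_ind: y => y IH jy.
rewrite AT_rec (bigD1 j) /=; last by rewrite (new_col_of pj) jy.
rewrite (AT_low jr) (elim_coef_new _ pj) mulrC mulfVK //.
rewrite big1 ?addr0 ?subrr // => k /andP[/andP[newk ky] kj].
case: (ltngtP k j) => [lt_kj|lt_jk|/val_inj eq_kj]; last by rewrite eq_kj eqxx in kj.
  have kr : (k < p + r)%N by rewrite pr.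
  by rewrite (AT_low (ltnW kr)) (new_col_low0 newk kr) mul0r.
by rewrite IH // mul0r.
Qed.

Lemma AT_old_pivot_row (i j y : 'I_m) : (i, j) \in P -> (j < y)%N -> AT i y = 0.
Proof.
move=> ij; have [jr _ row_i _] := old_pivotP ij.
elim/ord_ltn_ind: y => y IH jy.
rewrite AT_rec row_i // big1 ?subrr // => k /andP[newk ky].
case: (leqP k j) => [kj|jk]; last by rewrite IH // mul0r.
have kr : (k < i + r)%N := leq_ltn_trans kj jr.
by rewrite (AT_low (ltnW kr)) (new_col_low0 newk kr) mul0r.
Qed.

Lemma AT_row0 (x : 'I_m) : (forall q, A x q = 0) -> forall q, AT x q = 0.
Proof. by move=> row_x q; rewrite mxE big1 // => k _; rewrite row_x mul0r. Qed.

Lemma rca_step_old_row (x y : 'I_m) : ~~ new_col x -> B x y = AT x y.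
Proof.
move=> oldx; rewrite /B /rca_step -/M -/T invmx_T -mulmxA -/AT.
rewrite mulmxDl mul1mx mxE [(N *m AT) x y]mxE big1 ?addr0 // => k _.
by rewrite N_old_row // mul0r.
Qed.

Lemma rca_step_sq0 : B *m B = 0.
Proof.
rewrite /B /rca_step -/M -/T.
have -> : invmx T *m A *m T *m (invmx T *m A *m T) =
          invmx T *m (A *m (T *m invmx T) *m A) *m T by rewrite !mulmxA.
by rewrite invmx_T T_mul_inv mulmx1 A_sq0 mulmx0 mul0mx.
Qed.

(* In row p of a new pivot (p, x), the entries left of x sit in columns with
   vanishing rows and those right of x have been cleared, so B^2 = 0 gives
   B p x * B x y = 0. *)
Lemma rca_step_new_row0 (x y : 'I_m) : new_col x -> B x y = 0.
Proof.
case/new_colP => p px; move: (px); rewrite in_markup => /and3P[/eqP pr px_nz _].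
have xr : (x <= p + r)%N by rewrite pr.
have oldp := new_pivot_row_not_new px.
have := congr1 (fun X : 'M[F]_m => X p y) rca_step_sq0.
rewrite [(B *m B) p y]mxE [(0 : 'M[F]_m) p y]mxE (bigD1 x) //=.
rewrite big1 ?addr0 => [|k kx]; rewrite rca_step_old_row //.
  by rewrite (AT_low xr) => /eqP; rewrite mulf_eq0 (negbTE px_nz) => /eqP.
case: (ltngtP k x) => [lt_kx|lt_xk|/val_inj eq_kx]; last by rewrite eq_kx eqxx in kx.
  have kr : (k < p + r)%N by rewrite pr.
  rewrite (AT_low (ltnW kr)); have [->|pk] := eqVneq (A p k) 0; first by rewrite mul0r.
  have [i' /old_pivot_col_not_new oldk _] := low_entry_pivot kr pk.
  by rewrite rca_step_old_row // (AT_row0 (low_entry_row0 pk kr)) mulr0.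
by rewrite (AT_new_pivot_row px) // mul0r.
Qed.

Lemma rca_step_compliant : compliant blk B.
Proof.
rewrite /B /rca_step -/M -/T invmx_T.
apply: compliant_block_conj A_compliant; first exact: block_upper_Tprod_inv.
exact: (block_upper_Tprod (s := new_cols) A_compliant).
Qed.

Lemma rca_step_pivotP (i j : 'I_m) : (i, j) \in P :|: M ->
  [/\ (j < i + r.+1)%N, B i j != 0,
     forall q : 'I_m, (j < q)%N -> B i q = 0 & forall q, B j q = 0].
Proof.
rewrite in_setU => /orP[ij|ij].
  have [jr ij_nz _ row_j] := old_pivotP ij.
  have oldi := old_pivot_row_not_new ij.
  split => [|||q].
  - by rewrite addnS ltnS ltnW.
  - by rewrite rca_step_old_row // AT_low // ltnW.
  - by move=> q jq; rewrite rca_step_old_row // (AT_old_pivot_row ij jq).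
  - by rewrite rca_step_old_row ?(old_pivot_col_not_new ij) // AT_row0.
have oldi := new_pivot_row_not_new ij.
move: (ij); rewrite in_markup => /and3P[/eqP ir ij_nz _].
split => [|||q].
- by rewrite addnS ltnS ir.
- by rewrite rca_step_old_row // AT_low // ir.
- by move=> q jq; rewrite rca_step_old_row // (AT_new_pivot_row ij jq).
- exact: rca_step_new_row0 (new_col_of ij).
Qed.

Lemma rca_step_low_entry (i j : 'I_m) : (j < i + r.+1)%N -> B i j != 0 ->
  exists2 i', (i', j) \in P :|: M & (i <= i')%N.
Proof.
move=> jr Bij; have oldi : ~~ new_col i.
  by apply: contraNN Bij => /rca_step_new_row0 ->.
have jr' : (j <= i + r)%N by rewrite -ltnS -addnS.
move: Bij; rewrite rca_step_old_row // AT_low // => Aij.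
case: (ltnP j (i + r)) => [lt_jr|ge_jr].
  have [i' hi' ii'] := low_entry_pivot lt_jr Aij.
  by exists i' => //; rewrite in_setU hi'.
have ej : (i + r)%N = j by apply/eqP; rewrite eqn_leq ge_jr jr'.
case: (boolP [exists i', (i', j) \in P]) => [/existsP[i' hi']|/existsPn fresh].
  have [ji' _ _ _] := old_pivotP hi'; exists i'; first by rewrite in_setU hi'.
  by rewrite ltnW // -(ltn_add2r r) ej.
exists i => //; rewrite in_setU in_markup ej eqxx Aij /=.
by apply/orP; right; apply/forallP.
Qed.

Lemma rca_step_pivot_uniq (i i' j : 'I_m) :
  (i, j) \in P :|: M -> (i', j) \in P :|: M -> i = i'.
Proof.
rewrite !in_setU => /orP[ij|ij] /orP[i'j|i'j].
- exact: old_pivot_uniq ij i'j.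
- by move: (old_pivot_col_not_new ij); rewrite (new_col_of i'j).
- by move: (old_pivot_col_not_new i'j); rewrite (new_col_of ij).
- move: ij i'j; rewrite !in_markup => /and3P[/eqP ij _ _] /and3P[/eqP i'j _ _].
  by apply/val_inj/eqP; rewrite -(eqn_add2r r) ij i'j.
Qed.

Lemma rca_step_invariant : rca_invariant blk r.+1 B (P :|: M).
Proof.
split; [exact: rca_step_sq0 | exact: rca_step_compliant | exact: rca_step_pivotP |
        exact: rca_step_low_entry | exact: rca_step_pivot_uniq].
Qed.

End Step.

Section Iterations.
Variables (F : fieldType) (m b : nat) (blk : 'I_m -> 'I_b.+1) (D : 'M[F]_m).
Hypothesis connD : connection_matrix blk D.

Lemma rca_succ r : (0 < r)%N ->
  rca D r.+1 = (rca_step r (RCAmat D r) (rca D r).2, (rca D r).2 :|: marked_at D r).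
Proof. by case: r. Qed.

Lemma marked_atE r : (0 < r)%N -> marked_at D r = markup r (RCAmat D r) (rca D r).2.
Proof. by case: r. Qed.

Lemma pivots0 : pivots D 0 = set0.
Proof. by []. Qed.

Lemma pivotsE r : (0 < r)%N -> pivots D r = (rca D r).2 :|: marked_at D r.
Proof. by case: r. Qed.

Lemma pivots_rca r : (0 < r)%N -> pivots D r = (rca D r.+1).2.
Proof. by case: r. Qed.

Lemma rca_pivots_succ n : (rca D n).2 \subset (rca D n.+1).2.
Proof. by case: n => [|n]; [exact: sub0set | rewrite [rca D n.+2]rca_succ //= subsetUl]. Qed.

Lemma rca_pivots_mono r s : (r <= s)%N -> (rca D r).2 \subset (rca D s).2.
Proof.
move/subnK <-; elim: (s - r)%N => [|n IH]; first exact: subxx.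
exact: subset_trans IH (rca_pivots_succ _).
Qed.

Lemma rca_invariant_all r : (0 < r)%N -> rca_invariant blk r (RCAmat D r) (rca D r).2.
Proof.
case: connD => _ D_sq0 D_comp; elim: r => [//|[_ _|r IH _]].
  split => //= [i j|i j ji /D_comp/andP[ij _]|i i' j]; rewrite ?in_set0 //.
  by rewrite addn1 ltnS leqNgt ij in ji.
rewrite /RCAmat rca_succ //; exact: rca_step_invariant (IH isT).
Qed.

Lemma RCAmat_compliant r : compliant blk (RCAmat D r).
Proof. by case: r => [|r]; [case: connD | case: (rca_invariant_all (ltn0Sn r))]. Qed.

Lemma pivots_neq0 r (i j : 'I_m) : (i, j) \in pivots D r -> RCAmat D r i j != 0.
Proof.
case: r => [|r]; first by rewrite pivots0 in_set0.
rewrite pivotsE // in_setU => /orP[old|].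
  by case: (rca_invariant_all (ltn0Sn r)) => _ _ /(_ _ _ old)[].
by rewrite marked_atE // in_markup => /and3P[].
Qed.

Lemma pivots_col_uniq r (i i' j : 'I_m) : (0 < r)%N ->
  (i, j) \in pivots D r -> (i', j) \in pivots D r -> i = i'.
Proof.
move=> r0; rewrite pivots_rca //.
by case: (rca_invariant_all (ltn0Sn r)) => _ _ _ _; apply.
Qed.

Lemma below_diag_entry_pivot r (i j : 'I_m) : (0 < r)%N -> (j < i + r)%N ->
  RCAmat D r i j != 0 ->
  (i, j) \in pivots D r \/
  exists i' : 'I_m, [/\ (i', j) \in pivots D r, (i < i')%N &
    forall i'' : 'I_m, (i'', j) \in pivots D r -> i'' = i'].
Proof.
move=> r0 jr ij; have [_ _ _ low _] := rca_invariant_all r0.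
have [i' i'j ii'] := low _ _ jr ij.
have piv_i'j : (i', j) \in pivots D r by rewrite pivotsE // in_setU i'j.
have [->|ni] := eqVneq i i'; [by left | right].
exists i'; split => // [|i'' i''j]; first by rewrite ltn_neqAle val_eqE ni.
exact: pivots_col_uniq r0 i''j piv_i'j.
Qed.

Lemma marked_pivot_rows0 r s (i p : 'I_m) : (0 < r)%N -> (r < s)%N ->
  (i, p) \in marked_at D r ->
  (forall q : 'I_m, (p < q)%N -> RCAmat D s i q = 0) /\
  (forall q : 'I_m, RCAmat D s p q = 0).
Proof.
move=> r0 rs ip; have ip_s : (i, p) \in (rca D s).2.
  by apply: subsetP (rca_pivots_mono rs) _ _; rewrite rca_succ // in_setU ip orbT.
have [_ _ piv _ _] := rca_invariant_all (ltn_trans r0 rs).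
by have [_ _] := piv _ _ ip_s.
Qed.

Lemma marked_at_last (i j : 'I_m) : (i, j) \in marked_at D m.-1 -> j = m.-1 :> nat.
Proof.
rewrite /marked_at; case: eqP => [_|_]; first by rewrite in_set0.
rewrite in_markup => /and3P[/eqP ij _ _]; have := ltn_ord j; lia.
Qed.

Lemma last_pivot_col_free (i j : 'I_m) :
  (i, j) \in pivots D m.-1 -> forall k : 'I_m, (k, i) \notin pivots D m.-1.
Proof.
move=> ij k; apply/negP => ki; have ij_nz := pivots_neq0 ij.
have /andP[lt_ij _] := RCAmat_compliant ij_nz.
have [r0|r0] := posnP m.-1; first by move: ij; rewrite r0 pivots0 in_set0.
move: ki; rewrite pivotsE // in_setU => /orP[old|/marked_at_last last_i].
  have [_ _ piv _ _] := rca_invariant_all r0; have [_ _ _ row_i] := piv _ _ old.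
  by rewrite row_i eqxx in ij_nz.
by have := ltn_ord j; lia.
Qed.

Lemma last_pivot_rightmost (i j j' : 'I_m) :
  (i, j) \in pivots D m.-1 -> (i, j') \in pivots D m.-1 -> (j' <= j)%N.
Proof.
move=> ij ij'; rewrite leqNgt; apply/negP => lt_jj'.
have [r0|r0] := posnP m.-1; first by move: ij; rewrite r0 pivots0 in_set0.
move: ij; rewrite pivotsE // in_setU => /orP[old|/marked_at_last last_j].
  have [_ _ piv _ _] := rca_invariant_all r0; have [_ _ row_i _] := piv _ _ old.
  by move: (pivots_neq0 ij'); rewrite row_i ?eqxx.
by have := ltn_ord j'; lia.
Qed.

End Iterations.

Theorem mainTheorem11 (F : fieldType) (m b : nat) (blk : 'I_m -> 'I_b.+1)
    (D : 'M[F]_m) :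
  (0 < m)%N ->
  connection_matrix blk D ->
  (* (i) *)
  (forall r : nat, (r < m)%N -> compliant blk (RCAmat D r)) /\
  (* (ii) *)
  (forall r : nat, (1 <= r < m)%N ->
     (forall i j : 'I_m, (i, j) \in pivots D r -> RCAmat D r i j != 0) /\
     (forall i j : 'I_m, (j < i + r)%N -> RCAmat D r i j != 0 ->
        (i, j) \in pivots D r \/
        exists i' : 'I_m, [/\ (i', j) \in pivots D r, (i < i')%N &
          forall i'' : 'I_m, (i'', j) \in pivots D r -> i'' = i'])) /\
  (* (iii) *)
  (forall (r : nat) (i p : 'I_m), (1 <= r)%N -> (r.+2 <= m)%N ->
     (val i + r)%N = val p -> (i, p) \in marked_at D r ->
     forall s : nat, (r.+1 <= s < m)%N ->
       (forall q : 'I_m, (p < q)%N -> RCAmat D s i q = 0) /\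
       (forall q : 'I_m, RCAmat D s p q = 0)) /\
  (* (iv) *)
  (forall i j : 'I_m, (i, j) \in pivots D m.-1 ->
     forall k : 'I_m, (k, i) \notin pivots D m.-1) /\
  (* (v) *)
  (forall i j j' : 'I_m, (i, j) \in pivots D m.-1 ->
     (i, j') \in pivots D m.-1 -> j = j').
Proof.
move=> _ connD; split; first by move=> r _; exact: RCAmat_compliant connD r.
split.
  move=> r /andP[r0 _]; split => i j; first exact: (pivots_neq0 connD).
  exact: (below_diag_entry_pivot connD r0).
split.
  move=> r i p r0 _ _ ip s /andP[rs _].
  exact: (marked_pivot_rows0 connD r0 rs ip).
split; first exact: (last_pivot_col_free connD).
move=> i j j' ij ij'; apply/val_inj/eqP.
by rewrite eqn_leq !(last_pivot_rightmost connD ij ij', last_pivot_rightmost connD ij' ij).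
Qed.
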